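(* Assume (H_coerc), (H_norm), (H_only-min). There exist $\delta_{Ham}>0$ and $\delta_{Lag}>0$ such that, for every solution $u:\mathbb R\to\mathbb R^n$ of $\mathcal Du''=\nabla V(u)$ defined on all of $\mathbb R$ whose Hamiltonian $\frac12|u'|_{\mathcal D}^2-V(u)$ lies in $[-\delta_{Ham},\delta_{Ham}]$, and for every $x_0\in\mathbb R$: if $[x_0,x_0+1]\cap\Sigma_{Esc}[u]\ne\emptyset$ then $\int_{x_0}^{x_0+1}\bigl(\frac12|u'(x)|_{\mathcal D}^2+V(u(x))\bigr)dx\ge\delta_{Lag}$.
   Context: $n\ge1$; $\mathcal D$ a fixed $n\times n$ real symmetric positive definite matrix; $|v|_{\mathcal D}=\sqrt{v\cdot\mathcal Dv}$; $V:\mathbb R^n\to\mathbb R$ of class $C^k$, $k\ge2$. (H_coerc) $\lim_{R\to\infty}\inf_{|u|\ge R}u\cdot\nabla V(u)/|u|^2>0$. (H_norm) $V$ has a nondegenerate minimum point in $V^{-1}(\{0\})$. (H_only-min) every critical point of $V$ in $V^{-1}(\{0\})$ has positive definite Hessian. $\mathcal M_0$ = critical points of $V$ in $V^{-1}(\{0\})$. Let $\lambda_{\min}$ ($\lambda_{\max}$) be the minimum (maximum) eigenvalue among all $D^2V(m)$, $m\in\mathcal M_0$; $d_{Esc}>0$ is fixed small enough that for every $m\in\mathcal M_0$ and $|u-m|_{\mathcal D}\le d_{Esc}$, all eigenvalues of $D^2V(u)$ lie in $[\lambda_{\min}/2,2\lambda_{\max}]$. $\Sigma_{Esc}[u]=\{x\in\mathbb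 R:|u(x)-m|_{\mathcal D}>d_{Esc}\text{ for all }m\in\mathcal M_0\}$. *)

From mathcomp Require Import ssreflect ssrfun ssrbool eqtype ssrnat seq fintype bigop.
From Stdlib Require Import Reals.
Open Scope R_scope.

Definition Rn (n : nat) := 'I_n -> R.
Definition Mat (n : nat) := 'I_n -> 'I_n -> R.

Definition vzero {n} : Rn n := fun _ => 0.
Definition vadd {n} (u v : Rn n) : Rn n := fun i => u i + v i.
Definition vsub {n} (u v : Rn n) : Rn n := fun i => u i - v i.
Definition vscale {n} (a : R) (u : Rn n) : Rn n := fun i => a * u i.
Definition basis {n} (i : 'I_n) : Rn n := fun j => if j == i then 1 else 0.

Definition dot {n} (u v : Rn n) : R := \big[Rplus/0]_(i < n) (u i * v i).
Definition vnorm {n} (u : Rn n) : R := sqrt (dot u u).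

Definition mulv {n} (A : Mat n) (v : Rn n) : Rn n :=
  fun i => \big[Rplus/0]_(j < n) (A i j * v j).

Definition mat_symmetric {n} (A : Mat n) : Prop := forall i j, A i j = A j i.
Definition vnonzero {n} (v : Rn n) : Prop := exists i, v i <> 0.
Definition mat_posdef {n} (A : Mat n) : Prop :=
  forall v : Rn n, vnonzero v -> 0 < dot v (mulv A v).
Definition mat_nondegenerate {n} (A : Mat n) : Prop :=
  forall v : Rn n, (forall i, mulv A v i = 0) -> forall i, v i = 0.

Definition normD {n} (D : Mat n) (v : Rn n) : R := sqrt (dot v (mulv D v)).

Definition eigenvalue {n} (A : Mat n) (lam : R) : Prop :=
  exists v : Rn n, vnonzero v /\ forall i, mulv A v i = lam * v i.

Definition cont_Rn {n} (f : Rn n -> R) : Prop :=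
  forall x eps, 0 < eps -> exists delta, 0 < delta /\
    forall y, vnorm (vsub y x) < delta -> Rabs (f y - f x) < eps.

Definition is_partial {n} (f : Rn n -> R) (i : 'I_n) (g : Rn n -> R) : Prop :=
  forall x, derivable_pt_lim (fun t => f (vadd x (vscale t (basis i)))) 0 (g x).

Fixpoint Ck (n : nat) (k : nat) (f : Rn n -> R) {struct k} : Prop :=
  cont_Rn f /\
  match k with
  | O => True
  | S m => forall i : 'I_n, exists g, is_partial f i g /\ Ck n m g
  end.

Definition is_gradient {n} (V : Rn n -> R) (gradV : Rn n -> Rn n) : Prop :=
  forall i, is_partial V i (fun x => gradV x i).
Definition is_hessian {n} (gradV : Rn n -> Rn n) (HessV : Rn n -> Mat n) : Prop :=
  forall i j, is_partial (fun x => gradV x i) j (fun x => HessV x i j).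

Definition in_M0 {n} (V : Rn n -> R) (gradV : Rn n -> Rn n) (m : Rn n) : Prop :=
  V m = 0 /\ forall i, gradV m i = 0.

Definition local_min {n} (V : Rn n -> R) (m : Rn n) : Prop :=
  exists r, 0 < r /\ forall y, vnorm (vsub y m) < r -> V m <= V y.

(* (H_coerc): lim_{R->oo} inf_{|u|>=R} u.gradV(u)/|u|^2 > 0 *)
Definition H_coerc {n} (gradV : Rn n -> Rn n) : Prop :=
  exists c R0, 0 < c /\
    forall u, R0 <= vnorm u -> c <= dot u (gradV u) / (vnorm u ^ 2).

Definition H_norm {n} (V : Rn n -> R) (gradV : Rn n -> Rn n) (HessV : Rn n -> Mat n) : Prop :=
  exists m, V m = 0 /\ (forall i, gradV m i = 0) /\ local_min V m /\
            mat_nondegenerate (HessV m).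

Definition H_only_min {n} (V : Rn n -> R) (gradV : Rn n -> Rn n) (HessV : Rn n -> Mat n) : Prop :=
  forall m, in_M0 V gradV m -> mat_posdef (HessV m).

Definition in_Sigma_Esc {n} (D : Mat n) (V : Rn n -> R) (gradV : Rn n -> Rn n)
  (dEsc : R) (u : R -> Rn n) (x : R) : Prop :=
  forall m, in_M0 V gradV m -> normD D (vsub (u x) m) > dEsc.

Definition is_solution {n} (D : Mat n) (gradV : Rn n -> Rn n)
  (u u1 u2 : R -> Rn n) : Prop :=
  (forall x i, derivable_pt_lim (fun y => u y i) x (u1 x i)) /\
  (forall x i, derivable_pt_lim (fun y => u1 y i) x (u2 x i)) /\
  (forall x i, mulv D (u2 x) i = gradV (u x) i).

(* Let x in [x0, x0 + 1] be an escape point and [a, a + 1/2] a half-window around it.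
   Since the Hamiltonian H = |u'|_D^2/2 - V(u) is small, the Lagrangian L = |u'|_D^2 - H
   controls the kinetic term from above and below.
   - If u leaves the sup-ball of radius rho around u(x) within the half-window, then
     |u'| integrates to at least rho, and AM-GM with |u'|^2 <~ L + H bounds the integral of L.
   - Otherwise u stays near u(x).  By compactness (V and grad V continuous), a point far from
     M_0 in a bounded box has either V >= rho nearby, or a fixed direction d with
     d . grad V >= rho nearby; outside the box the coercivity of V gives u . grad V >~ |u|^2.
     In the first case |u'|_D^2 = 2 (V + H) is large; in the others r = d . D u' (resp.
     r = u . D u') grows at a definite rate, so |r|, hence |u'|, is large on a subwindow of
     length 1/8, and there L >= |u'|_D^2 - H is large. *)

From HB Require Import structures.
From mathcomp Require Import ssreflect ssrfun ssrbool eqtype ssrnat seq fintype bigop.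
From Stdlib Require Import Reals Lra Lia Classical ClassicalEpsilon FunctionalExtensionality.
Open Scope R_scope.

Set Implicit Arguments.
Unset Strict Implicit.

Lemma Rplus_assoc_law : associative Rplus. Proof. by move=> x y z; ring. Qed.
HB.instance Definition _ := Monoid.isComLaw.Build R 0 Rplus Rplus_assoc_law Rplus_comm Rplus_0_l.

Section RealSums.
Variables (I : Type) (r : seq I).

Lemma big_Rle (F G : I -> R) :
  (forall i, F i <= G i) -> \big[Rplus/0]_(i <- r) F i <= \big[Rplus/0]_(i <- r) G i.
Proof. by move=> H; apply: (big_ind2 (fun a b => a <= b)) => *; [lra|lra|]. Qed.

Lemma big_Rge0 (F : I -> R) : (forall i, 0 <= F i) -> 0 <= \big[Rplus/0]_(i <- r) F i.
Proof. by move=> H; apply: (big_ind (fun a => 0 <= a)) => *; [lra|lra|]. Qed.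

Lemma Rabs_big_le (F : I -> R) :
  Rabs (\big[Rplus/0]_(i <- r) F i) <= \big[Rplus/0]_(i <- r) Rabs (F i).
Proof.
apply: (big_ind2 (fun a b => Rabs a <= b)) => [|x1 x2 y1 y2 h1 h2|i]; last lra.
- by rewrite Rabs_R0; lra.
- by apply: Rle_trans (Rabs_triang _ _) _; lra.
Qed.

Lemma big_Rmult_l (a : R) (F : I -> R) :
  \big[Rplus/0]_(i <- r) (a * F i) = a * \big[Rplus/0]_(i <- r) F i.
Proof. by apply: (big_ind2 (fun x y => x = a * y)) => [|? ? ? ? -> ->|//]; ring. Qed.

End RealSums.

Lemma big_ord_Rconst n (c : R) : \big[Rplus/0]_(i < n) c = INR n * c.
Proof. by rewrite big_const_ord; elim: n => [|n IH]; rewrite ?iterS ?IH ?S_INR /=; ring. Qed.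

Lemma big_ord_Rterm_le n (F : 'I_n -> R) j :
  (forall i, 0 <= F i) -> F j <= \big[Rplus/0]_(i < n) F i.
Proof.
move=> H; rewrite (bigD1 j) //= -{1}[F j]Rplus_0_r; apply: Rplus_le_compat_l.
by apply: (big_ind (fun a => 0 <= a)) => *; [lra|lra|].
Qed.

Lemma ord_argmax n (f : 'I_n -> R) (j : 'I_n) : exists i0, forall i, f i <= f i0.
Proof.
case: n f j => [f [m Hm]|n f _]; first by rewrite ltn0 in Hm.
suff [i0 _ Hi0] : exists2 i0, i0 \in enum 'I_n.+1 & forall i, i \in enum 'I_n.+1 -> f i <= f i0.
  by exists i0 => i; apply: Hi0; rewrite mem_enum.
have : ord0 \in enum 'I_n.+1 by rewrite mem_enum.
case: (enum 'I_n.+1) => [//|a s] _.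
elim: s a => [|b s IH] a.
  by exists a; rewrite ?inE // => i; rewrite inE => /eqP ->; apply: Rle_refl.
have [i0 Hs Hmax] := IH b.
case: (Rle_lt_dec (f a) (f i0)) => h.
- exists i0; first by rewrite inE Hs orbT.
  by move=> i; rewrite inE => /orP [/eqP ->|/Hmax].
- exists a; first by rewrite inE eqxx.
  by move=> i; rewrite inE => /orP [/eqP ->|/Hmax]; lra.
Qed.

Section Vectors.
Variable n : nat.
Implicit Types (v w d : Rn n) (D : Mat n).

Lemma Rabs_coord_sqr_le_dot v i : Rabs (v i) * Rabs (v i) <= dot v v.
Proof.
rewrite -Rabs_mult Rabs_pos_eq; last exact: Rle_0_sqr.
by apply: big_ord_Rterm_le => j; apply: Rle_0_sqr.
Qed.

Lemma dot_self_ge0 v : 0 <= dot v v.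
Proof. by apply: big_Rge0 => i; apply: Rle_0_sqr. Qed.

Lemma dot_self_le v t : (forall i, Rabs (v i) <= t) -> dot v v <= INR n * (t * t).
Proof.
move=> Hv; rewrite /dot -big_ord_Rconst; apply: big_Rle => i.
have := Hv i; have := Rabs_pos (v i); have := Rsqr_abs (v i); rewrite /Rsqr; nra.
Qed.

Lemma dot0l v w : (forall i, v i = 0) -> dot v w = 0.
Proof.
move=> Hv; rewrite /dot (eq_bigr (fun _ => 0)) => [|i _]; last by rewrite Hv Rmult_0_l.
by rewrite big_ord_Rconst Rmult_0_r.
Qed.

Lemma vnonzero_of_dot_gt0 v : 0 < dot v v -> vnonzero v.
Proof.
move=> Hv; apply: NNPP => Hz; move: Hv; rewrite dot0l; first lra.
by move=> i; apply: NNPP => Hi; apply: Hz; exists i.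
Qed.

Lemma dot_scalel a v w : dot (vscale a v) w = a * dot v w.
Proof. by rewrite /dot -big_Rmult_l; apply: eq_bigr => i _; rewrite /vscale Rmult_assoc. Qed.

Lemma dot_scaler a v w : dot v (vscale a w) = a * dot v w.
Proof. by rewrite /dot -big_Rmult_l; apply: eq_bigr => i _; rewrite /vscale; ring. Qed.

Lemma mulv_scale D a v : mulv D (vscale a v) = vscale a (mulv D v).
Proof.
apply: functional_extensionality => i.
by rewrite /mulv /vscale -big_Rmult_l; apply: eq_bigr => j _; ring.
Qed.

Lemma vnorm_lt v t e : 0 <= e -> (forall i, Rabs (v i) <= t) -> INR n * (t * t) < e * e ->
  vnorm v < e.
Proof.
move=> He Hv Hte; rewrite /vnorm -(sqrt_square e) //.
by apply: sqrt_lt_1_alt; split; [apply: dot_self_ge0 | apply: Rle_lt_trans (dot_self_le Hv) Hte].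
Qed.

Definition mat_abs_sum D : R := \big[Rplus/0]_(i < n) \big[Rplus/0]_(j < n) Rabs (D i j).

Lemma mat_abs_sum_ge0 D : 0 <= mat_abs_sum D.
Proof. by apply: big_Rge0 => i; apply: big_Rge0 => j; apply: Rabs_pos. Qed.

Lemma Rabs_dot_mulv_le D d w M t : 0 <= M -> 0 <= t ->
  (forall i, Rabs (d i) <= M) -> (forall j, Rabs (w j) <= t) ->
  Rabs (dot d (mulv D w)) <= mat_abs_sum D * (M * t).
Proof.
move=> M0 t0 Hd Hw; rewrite /mat_abs_sum Rmult_comm -big_Rmult_l.
apply: Rle_trans (Rabs_big_le _ _) _; apply: big_Rle => i.
rewrite Rabs_mult.
have HDw : Rabs (mulv D w i) <= t * \big[Rplus/0]_(j < n) Rabs (D i j).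
  apply: Rle_trans (Rabs_big_le _ _) _; rewrite -big_Rmult_l; apply: big_Rle => j.
  by rewrite Rabs_mult; have := Hw j; have := Rabs_pos (D i j); nra.
have := Hd i; have := Rabs_pos (d i); have := Rabs_pos (mulv D w i).
have : 0 <= \big[Rplus/0]_(j < n) Rabs (D i j) by apply: big_Rge0 => j; apply: Rabs_pos.
by rewrite /mulv in HDw *; nra.
Qed.

Lemma quad_ge0 D v : mat_posdef D -> 0 <= dot v (mulv D v).
Proof.
move=> HD; case: (classic (vnonzero v)) => [/HD|Hz]; first lra.
rewrite dot0l; first lra.
by move=> i; apply: NNPP => Hi; apply: Hz; exists i.
Qed.

Lemma normD_sqr D v : mat_posdef D -> normD D v ^ 2 = dot v (mulv D v).
Proof. by move=> HD; rewrite /normD /= Rmult_1_r sqrt_sqrt //; apply: quad_ge0. Qed.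

Lemma quad_le D v t : mat_posdef D -> 0 <= t -> (forall i, Rabs (v i) <= t) ->
  normD D v ^ 2 <= mat_abs_sum D * (t * t).
Proof.
move=> HD t0 Hv; rewrite normD_sqr //.
exact: Rle_trans (Rle_abs _) (Rabs_dot_mulv_le D t0 t0 Hv Hv).
Qed.

End Vectors.

Lemma small_radius K e : 0 <= K -> 0 < e -> exists t, 0 < t /\ K * (t * t) < e * e.
Proof.
move=> K0 e0; exists (e / (K + 1)); split; first by apply: Rdiv_lt_0_compat; lra.
have -> : K * (e / (K + 1) * (e / (K + 1))) = e * e * (K / ((K + 1) * (K + 1))) by field; lra.
have : K / ((K + 1) * (K + 1)) < 1.
  by apply: (Rmult_lt_reg_r ((K + 1) * (K + 1))); [nra | field_simplify; nra].
have : 0 < e * e by nra.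
nra.
Qed.

Definition extraction (phi : nat -> nat) : Prop := forall k, (phi k < phi k.+1)%nat.

Lemma extraction_ge phi : extraction phi -> forall k, (k <= phi k)%nat.
Proof. by move=> Hphi; elim=> [//|k IH]; apply: leq_ltn_trans IH (Hphi k). Qed.

Lemma extraction_comp phi psi : extraction phi -> extraction psi -> extraction (phi \o psi).
Proof. by move=> Hphi Hpsi k; apply: (homo_ltn ltn_trans Hphi). Qed.

Lemma Un_cv_extraction u l phi : extraction phi -> Un_cv u l -> Un_cv (fun k => u (phi k)) l.
Proof.
move=> Hphi Hu e e0; have [N HN] := Hu e e0.
by exists N => k /leP Hk; apply: HN; apply/leP; apply: leq_trans Hk (extraction_ge Hphi k).
Qed.

Lemma Un_cv_const c : Un_cv (fun _ => c) c.
Proof. by move=> e e0; exists 0%nat => k _; rewrite /Rdist Rminus_diag Rabs_R0. Qed.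

Lemma Un_cv_inv_succ : Un_cv (fun k => / (INR k + 1)) 0.
Proof.
move=> e e0; have [N [HN HN0]] := archimed_cor1 e e0.
exists N => k Hk; have HNk : INR N <= INR k by apply: le_INR.
have HN0' : 0 < INR N by apply: lt_0_INR.
rewrite /Rdist Rminus_0_r Rabs_pos_eq; last by apply: Rlt_le; apply: Rinv_0_lt_compat; lra.
by apply: Rle_lt_trans HN; apply: Rinv_le_contravar; lra.
Qed.

Lemma Un_cv_near a b e l : Un_cv a l -> (forall k, Rabs (b k - a k) <= e k) -> Un_cv e 0 ->
  Un_cv b l.
Proof.
move=> Ha Hb He eps e0.
have [N1 H1] := Ha _ (ltac:(lra) : eps / 2 > 0).
have [N2 H2] := He _ (ltac:(lra) : eps / 2 > 0).
exists (Nat.max N1 N2) => k Hk; rewrite /Rdist in H1 H2 *.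
have := H1 k ltac:(lia); have := H2 k ltac:(lia); have := Hb k.
have := Rabs_triang (b k - a k) (a k - l); have := Rle_abs (e k).
rewrite Rminus_0_r (_ : b k - a k + (a k - l) = b k - l); [lra | ring].
Qed.

Lemma cluster_extraction u l : ValAdh u l -> exists phi, extraction phi /\ Un_cv (fun k => u (phi k)) l.
Proof.
move=> Hl.
have /choice [pick Hpick] : forall Nk : nat * nat, exists p,
    (Nk.1 <= p)%nat /\ Rabs (u p - l) <= / (INR Nk.2 + 1).
  move=> [N k].
  have Hk : 0 < / (INR k + 1) by apply: Rinv_0_lt_compat; have := pos_INR k; lra.
  have [p [/leP Hp Hup]] :=
    Hl (disc l (mkposreal _ Hk)) N (ex_intro _ (mkposreal _ Hk) (fun y h => h)).
  by exists p; split => //; apply: Rlt_le.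
pose fix phi k := if k is k'.+1 then pick ((phi k').+1, k) else pick (0%nat, 0%nat).
exists phi; split; first by move=> k; exact: (proj1 (Hpick (_, _))).
apply: Un_cv_near (Un_cv_const l) _ Un_cv_inv_succ.
by case=> [|k]; exact: (proj2 (Hpick (_, _))).
Qed.

Lemma Rabs_le_inv a b : Rabs a <= b -> - b <= a <= b.
Proof. by move=> H; have := Rle_abs a; have := Rle_abs (- a); rewrite Rabs_Ropp; lra. Qed.

Lemma bounded_extraction_cv u B : (forall k, Rabs (u k) <= B) ->
  exists phi, extraction phi /\ exists l, Un_cv (fun k => u (phi k)) l.
Proof.
move=> HB.
have [l Hl] : exists l, ValAdh u l.
  apply: (Bolzano_Weierstrass u (fun c => - B <= c <= B)); first exact: compact_P3.
  by move=> k; apply: Rabs_le_inv.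
have [phi [Hphi Hcv]] := cluster_extraction Hl.
by exists phi; split => //; exists l.
Qed.

Definition coord_cv n (w : nat -> Rn n) (q : Rn n) : Prop :=
  forall i, Un_cv (fun k => w k i) (q i).

Section CoordinateConvergence.
Variable n : nat.
Implicit Types (w : nat -> Rn n) (q : Rn n).

Lemma bounded_coord_extraction_cv w B : (forall k i, Rabs (w k i) <= B) ->
  exists phi, extraction phi /\ exists q, coord_cv (fun k => w (phi k)) q.
Proof.
move=> HB.
suff /(_ n) [phi [Hphi [q Hq]]] : forall m, exists phi, extraction phi /\
    exists q : Rn n, forall i : 'I_n, (i < m)%nat -> Un_cv (fun k => w (phi k) i) (q i).
  by exists phi; split => //; exists q => i; apply: Hq.
elim=> [|m [phi [Hphi [q Hq]]]].
  by exists (fun k => k); split => [k|]; last exists vzero.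
case: (ltnP m n) => [Hmn|Hnm]; last first.
  by exists phi; split => //; exists q => i _; apply: Hq; apply: leq_trans (ltn_ord i) Hnm.
pose j := Ordinal Hmn.
have [psi [Hpsi [l Hl]]] := bounded_extraction_cv (fun k => HB (phi k) j).
exists (phi \o psi); split; first exact: extraction_comp.
exists (fun i => if i == j then l else q i) => i Hi.
case: eqP => [->|Hij] //.
apply: (Un_cv_extraction (u := fun k => w (phi k) i)) Hpsi _; apply: Hq.
by move: Hi; rewrite ltnS leq_eqVlt => /orP [/eqP Him|//]; case: Hij; apply: val_inj.
Qed.

Lemma coord_cv_unif w q : coord_cv w q ->
  forall e, 0 < e -> exists N, forall k, (N <= k)%nat -> forall i, Rabs (w k i - q i) < e.
Proof.
move=> Hw e e0.
have /choice [N HN] : forall i : 'I_n, exists N, forall k, (N <= k)%nat -> Rabs (w k i - q i) < e.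
  by move=> i; have [N HN] := Hw i e e0; exists N => k /leP /HN.
exists (\max_(i < n) N i) => k Hk i; apply: HN; apply: leq_trans Hk.
by rewrite (bigD1 i) //= leq_max leqnn.
Qed.

Lemma cont_Rn_coord_cv (f : Rn n -> R) w q : cont_Rn f -> coord_cv w q ->
  Un_cv (fun k => f (w k)) (f q).
Proof.
move=> Hf Hw e e0.
have [d [d0 Hd]] := Hf q e e0.
have [t [t0 Ht]] := small_radius (pos_INR n) d0.
have [N HN] := coord_cv_unif Hw t0.
exists N => k /leP Hk; apply: Hd; apply: (vnorm_lt (Rlt_le _ _ d0) _ Ht) => i.
exact: Rlt_le (HN k Hk i).
Qed.

Lemma big_Un_cv (I : Type) (r : seq I) (a : nat -> I -> R) (l : I -> R) :
  (forall i, Un_cv (fun k => a k i) (l i)) ->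
  Un_cv (fun k => \big[Rplus/0]_(i <- r) a k i) (\big[Rplus/0]_(i <- r) l i).
Proof.
move=> Ha; elim: r => [|x r IH].
  by rewrite big_nil; apply: (Un_cv_ext (fun _ => 0)) (Un_cv_const 0) => k; rewrite big_nil.
rewrite big_cons; apply: (Un_cv_ext (fun k => a k x + \big[Rplus/0]_(i <- r) a k i)).
  by move=> k; rewrite big_cons.
exact: CV_plus.
Qed.

Lemma dot_coord_cv w1 w2 q1 q2 : coord_cv w1 q1 -> coord_cv w2 q2 ->
  Un_cv (fun k => dot (w1 k) (w2 k)) (dot q1 q2).
Proof. by move=> H1 H2; apply: big_Un_cv => i; apply: CV_mult. Qed.

Lemma mulv_coord_cv (D : Mat n) w q : coord_cv w q -> coord_cv (fun k => mulv D (w k)) (mulv D q).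
Proof. by move=> Hw i; apply: big_Un_cv => j; apply: CV_mult (Un_cv_const _) (Hw j). Qed.

Lemma coord_cv_near w1 w2 e q : coord_cv w1 q -> (forall k i, Rabs (w2 k i - w1 k i) <= e k) ->
  Un_cv e 0 -> coord_cv w2 q.
Proof. by move=> Hw He He0 i; apply: Un_cv_near (Hw i) (fun k => He k i) He0. Qed.

End CoordinateConvergence.

Section Compactness.
Variable n : nat.

Lemma normalize_sup (v : Rn n) : vnonzero v ->
  exists a, 0 < a /\ (forall i, Rabs (a * v i) <= 1) /\ 1 <= dot (vscale a v) (vscale a v).
Proof.
move=> [i1 Hi1]; have [i0 Hi0] := ord_argmax (fun i => Rabs (v i)) i1.
set M := Rabs (v i0) in Hi0.
have M0 : 0 < M by have := Hi0 i1; have := Rabs_pos_lt _ Hi1; lra.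
have HaM : Rabs (/ M) * M = 1 by rewrite Rabs_inv Rabs_pos_eq ?Rinv_l; lra.
exists (/ M); split; first exact: Rinv_0_lt_compat.
split=> [i|]; rewrite ?Rabs_mult.
  by have := Hi0 i; have := Rabs_pos (/ M); nra.
apply: Rle_trans (Rabs_coord_sqr_le_dot _ i0); rewrite /vscale Rabs_mult -/M HaM; lra.
Qed.

Lemma posdef_coercive (D : Mat n) : mat_posdef D ->
  exists al, 0 < al /\ forall v, al * dot v v <= dot v (mulv D v).
Proof.
move=> HD; apply: NNPP => Hno.
have /choice [w Hw] : forall k : nat, exists w : Rn n, (forall i, Rabs (w i) <= 1) /\
    1 <= dot w w /\ dot w (mulv D w) <= INR n * / (INR k + 1).
  move=> k; have Hk : 0 < / (INR k + 1) by apply: Rinv_0_lt_compat; have := pos_INR k; lra.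
  have [v Hv] : exists v, dot v (mulv D v) < / (INR k + 1) * dot v v.
    apply: NNPP => Hv; apply: Hno; exists (/ (INR k + 1)); split => // v.
    by apply: Rnot_lt_le => Hlt; apply: Hv; exists v.
  have Hvv : 0 < dot v v by have := quad_ge0 v HD; nra.
  have [a [a0 [Hav Haa]]] := normalize_sup (vnonzero_of_dot_gt0 Hvv).
  exists (vscale a v); split => //; split => //.
  have Hwn := dot_self_le Hav.
  move: Haa Hwn; rewrite mulv_scale !dot_scalel !dot_scaler => Haa Hwn.
  have : a * (a * dot v (mulv D v)) < / (INR k + 1) * (a * (a * dot v v)).
    have : 0 < a * a by nra.
    nra.
  nra.
have [phi [Hphi [q Hq]]] := bounded_coord_extraction_cv (fun k => proj1 (Hw k)).
have Hqq : 1 <= dot q q.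
  apply: (Rle_cv_lim _ (Un_cv_const 1) (dot_coord_cv Hq Hq)) => k.
  exact: (proj1 (proj2 (Hw _))).
have HqDq : dot q (mulv D q) <= 0.
  have Hlim := CV_mult _ _ _ _ (Un_cv_const (INR n)) (Un_cv_extraction Hphi Un_cv_inv_succ).
  rewrite Rmult_0_r in Hlim.
  apply: (Rle_cv_lim _ (dot_coord_cv Hq (mulv_coord_cv D Hq)) Hlim) => k.
  exact: (proj2 (proj2 (Hw _))).
have := HD q (vnonzero_of_dot_gt0 (ltac:(lra) : 0 < dot q q)); lra.
Qed.

Definition sup_ball (p : Rn n) (r : R) (y : Rn n) : Prop := forall i, Rabs (y i - p i) <= r.

Lemma coord_cv_normD_lt (D : Mat n) w q e : mat_posdef D -> coord_cv w q -> 0 < e ->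
  exists k, normD D (vsub (w k) q) < e.
Proof.
move=> HD Hw e0.
have [t [t0 Ht]] := small_radius (mat_abs_sum_ge0 D) e0.
have [N HN] := coord_cv_unif Hw t0.
exists N; have Hsq := quad_le (v := vsub (w N) q) HD (Rlt_le _ _ t0) (fun i => Rlt_le _ _ (HN N (leqnn N) i)).
rewrite -Rsqr_pow2 /Rsqr in Hsq; apply: Rnot_le_lt => Hge.
have := Rmult_le_compat _ _ _ _ (Rlt_le _ _ e0) (Rlt_le _ _ e0) Hge Hge.
lra.
Qed.

Variables (V : Rn n -> R) (gradV : Rn n -> Rn n).
Hypotheses (HVc : cont_Rn V) (Hgc : forall i, cont_Rn (fun x => gradV x i)).

Section CriticalLimit.
Variables (e : nat -> R) (p : nat -> Rn n) (q : Rn n).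
Hypotheses (He : Un_cv e 0) (Hpq : coord_cv p q).

Lemma limit_V_eq0 :
  (forall k, exists y, sup_ball (p k) (e k) y /\ - e k <= V y <= e k) -> V q = 0.
Proof.
move=> /choice [y Hy].
have HVy := cont_Rn_coord_cv HVc (coord_cv_near Hpq (fun k => proj1 (Hy k)) He).
have Hme : Un_cv (fun k => - e k) 0 by rewrite -Ropp_0; apply: CV_opp.
apply: Rle_antisym.
- by apply: (Rle_cv_lim _ HVy He) => k; case: (Hy k) => _ [].
- by apply: (Rle_cv_lim _ Hme HVy) => k; case: (Hy k) => _ [].
Qed.

Lemma limit_grad_eq0 :
  (forall k d, (forall i, Rabs (d i) <= 1) ->
     exists z, sup_ball (p k) (e k) z /\ dot d (gradV z) <= e k) ->
  forall i, gradV q i = 0.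
Proof.
move=> Hz; apply: NNPP => /not_all_ex_not [i0 Hi0].
have [a [a0 [Hd Haa]]] := normalize_sup (ex_intro _ i0 Hi0 : vnonzero (gradV q)).
have /choice [z Hzk] := fun k => Hz k (vscale a (gradV q)) Hd.
have Hzq := coord_cv_near Hpq (fun k => proj1 (Hzk k)) He.
have Hgz : coord_cv (fun k => gradV (z k)) (gradV q).
  by move=> i; apply: (cont_Rn_coord_cv (Hgc i) Hzq).
have Hdg := dot_coord_cv (fun i => Un_cv_const (vscale a (gradV q) i)) Hgz.
have Hle : dot (vscale a (gradV q)) (gradV q) <= 0.
  by apply: (Rle_cv_lim _ Hdg He) => k; case: (Hzk k).
move: Haa Hle; rewrite !dot_scalel dot_scaler; nra.
Qed.

End CriticalLimit.

Lemma escape_alternative (D : Mat n) (dEsc B : R) : mat_posdef D -> 0 < dEsc ->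
  exists rho, 0 < rho /\ rho <= 1 /\ forall p, (forall i, Rabs (p i) <= B) ->
    (forall m, in_M0 V gradV m -> normD D (vsub p m) > dEsc) ->
    (forall y, sup_ball p rho y -> - rho <= V y -> rho <= V y) \/
    (exists d, (forall i, Rabs (d i) <= 1) /\
       forall y, sup_ball p rho y -> rho <= dot d (gradV y)).
Proof.
move=> HD HdEsc; apply: NNPP => Hno.
have /choice [p Hp] : forall k : nat, exists p : Rn n, (forall i, Rabs (p i) <= B) /\
    (forall m, in_M0 V gradV m -> normD D (vsub p m) > dEsc) /\
    (exists y, sup_ball p (/ (INR k + 1)) y /\ - / (INR k + 1) <= V y <= / (INR k + 1)) /\
    (forall d, (forall i, Rabs (d i) <= 1) ->
       exists z, sup_ball p (/ (INR k + 1)) z /\ dot d (gradV z) <= / (INR k + 1)).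
  move=> k; set r := / (INR k + 1).
  have r0 : 0 < r by apply: Rinv_0_lt_compat; have := pos_INR k; lra.
  have r1 : r <= 1 by rewrite /r -Rinv_1; apply: Rinv_le_contravar; have := pos_INR k; lra.
  apply: NNPP => Hk; apply: Hno; exists r; do 2!split => //; move=> p HpB Hesc.
  apply: NNPP => /not_or_and [HV Hg]; apply: Hk; exists p; do 2!split => //; split.
  - apply: NNPP => Hy; apply: HV => y Hyp HVy; apply: Rnot_lt_le => HVr.
    by apply: Hy; exists y; split => //; lra.
  - move=> d Hd; apply: NNPP => Hz; apply: Hg; exists d; split => // y Hy.
    by apply: Rnot_lt_le => Hlt; apply: Hz; exists y; split => //; lra.
have [phi [Hphi [q Hq]]] := bounded_coord_extraction_cv (fun k => proj1 (Hp k)).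
have He := Un_cv_extraction Hphi Un_cv_inv_succ.
have Hq0 : in_M0 V gradV q.
  split; first by apply: (limit_V_eq0 He Hq) => k; case: (Hp (phi k)) => _ [_ []].
  by apply: (limit_grad_eq0 He Hq) => k; case: (Hp (phi k)) => _ [_ [_]].
have [k Hk] := coord_cv_normD_lt HD Hq HdEsc.
have := proj1 (proj2 (Hp (phi k))) q Hq0; lra.
Qed.

End Compactness.

Lemma Ck2_cont_grad n k (V : Rn n -> R) (gradV : Rn n -> Rn n) :
  (2 <= k)%nat -> Ck n k V -> is_gradient V gradV ->
  cont_Rn V /\ forall i, cont_Rn (fun x => gradV x i).
Proof.
case: k => [//|k] _ [HV Hp] Hg; split => // i.
have [g [Hgi Hgc]] := Hp i.
have -> : (fun x => gradV x i) = g.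
  by apply: functional_extensionality => x; apply: uniqueness_limite (Hg i x) (Hgi x).
by case: k Hgc {Hp} => [|k] [].
Qed.

Lemma coerc_dot_ge n (gradV : Rn n -> Rn n) c R0 :
  (forall u, R0 <= vnorm u -> c <= dot u (gradV u) / (vnorm u ^ 2)) ->
  forall w i0, Rabs R0 <= Rabs (w i0) -> 0 < Rabs (w i0) -> c * dot w w <= dot w (gradV w).
Proof.
move=> Hc w i0 HR0 Hw0.
have Hww := Rabs_coord_sqr_le_dot w i0.
have Hpos : 0 < dot w w by nra.
have Hnorm : vnorm w ^ 2 = dot w w by rewrite /vnorm /= Rmult_1_r sqrt_sqrt; lra.
have HR : R0 <= vnorm w.
  apply: Rle_trans (Rle_abs R0) _; apply: Rle_trans HR0 _.
  rewrite /vnorm -(sqrt_square (Rabs (w i0))); last exact: Rabs_pos.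
  exact: sqrt_le_1_alt.
have := Rmult_le_compat_r _ _ _ (Rlt_le _ _ Hpos) (Hc w HR).
by rewrite Hnorm /Rdiv Rmult_assoc Rinv_l ?Rmult_1_r //; lra.
Qed.

Lemma derivable_pt_lim_big (I : Type) (r : seq I) (f f' : I -> R -> R) x :
  (forall i, derivable_pt_lim (f i) x (f' i x)) ->
  derivable_pt_lim (fun t => \big[Rplus/0]_(i <- r) f i t) x (\big[Rplus/0]_(i <- r) f' i x).
Proof.
move=> Hf; elim: r => [|a r IH].
  rewrite big_nil; apply: (derivable_pt_lim_ext (fct_cte 0)); first by move=> t; rewrite big_nil.
  exact: derivable_pt_lim_const.
rewrite big_cons; apply: (derivable_pt_lim_ext (f a + (fun t => \big[Rplus/0]_(i <- r) f i t))%F).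
  by move=> t; rewrite big_cons.
exact: derivable_pt_lim_plus.
Qed.

Section Solution.
Variables (n : nat) (D : Mat n) (gradV : Rn n -> Rn n) (u u1 u2 : R -> Rn n).
Hypothesis Hs : is_solution D gradV u u1 u2.

Lemma solution_u1_cont i x : continuity_pt (fun t => u1 t i) x.
Proof. by apply: derivable_continuous_pt; exists (u2 x i); case: Hs => _ [Hu1 _]; exact: Hu1. Qed.

Lemma derivable_pt_lim_dot_mulv_u1 (w w' : R -> Rn n) x :
  (forall i, derivable_pt_lim (fun t => w t i) x (w' x i)) ->
  derivable_pt_lim (fun t => dot (w t) (mulv D (u1 t))) x
    (dot (w' x) (mulv D (u1 x)) + dot (w x) (gradV (u x))).
Proof.
case: Hs => _ [Hu1 Hu2] Hw.
have -> : dot (w x) (gradV (u x)) = dot (w x) (mulv D (u2 x)).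
  by apply: eq_bigr => i _; rewrite Hu2.
rewrite /dot -big_split.
apply: (derivable_pt_lim_big _ (f := fun i t => w t i * mulv D (u1 t) i)
  (f' := fun i t => w' t i * mulv D (u1 t) i + w t i * mulv D (u2 t) i)) => i.
apply: derivable_pt_lim_mult => //.
apply: (derivable_pt_lim_big _ (f := fun j t => D i j * u1 t j) (f' := fun j t => D i j * u2 t j)) => j.
exact: derivable_pt_lim_scal.
Qed.

End Solution.

Lemma RiemannInt_FTC (f f' : R -> R) a b (pr : Riemann_integrable f' a b) :
  (forall x, derivable_pt_lim f x (f' x)) -> (forall x, continuity_pt f' x) -> a <= b ->
  RiemannInt pr = f b - f a.
Proof.
move=> Hd Hc Hab.
have diff : derivable f by move=> x; exists (f' x); exact: Hd.
have Hf' : derive f diff = f'.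
  by apply: functional_extensionality => x; apply: derive_pt_eq_0; exact: Hd.
have cont : continuity (derive f diff) by rewrite Hf'.
have pr' : Riemann_integrable (derive (mkC1 cont) (diff0 (mkC1 cont))) a b by rewrite /= Hf'.
rewrite -(RiemannInt_P33 (mkC1 cont) pr' Hab).
by apply: RiemannInt_P18 => // x _; rewrite /= Hf'.
Qed.

Lemma RiemannInt_const_le (f : R -> R) a b c (pr : Riemann_integrable f a b) :
  a <= b -> (forall t, a <= t <= b -> c <= f t) -> c * (b - a) <= RiemannInt pr.
Proof.
move=> Hab Hf; rewrite -(RiemannInt_P15 (RiemannInt_P14 a b c)).
by apply: RiemannInt_P19 => // t Ht; apply: Hf; lra.
Qed.

Lemma RiemannInt_split3 (f : R -> R) a b c d (pr : Riemann_integrable f a d) :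
  a <= b -> b <= c -> c <= d ->
  exists (pr1 : Riemann_integrable f a b) (pr2 : Riemann_integrable f b c)
         (pr3 : Riemann_integrable f c d),
    RiemannInt pr = RiemannInt pr1 + RiemannInt pr2 + RiemannInt pr3.
Proof.
move=> Hab Hbc Hcd.
have pr1 : Riemann_integrable f a b by apply: (RiemannInt_P22 pr); lra.
have pr23 : Riemann_integrable f b d by apply: (RiemannInt_P23 pr); lra.
have pr2 : Riemann_integrable f b c by apply: (RiemannInt_P22 pr23); lra.
have pr3 : Riemann_integrable f c d by apply: (RiemannInt_P23 pr23); lra.
exists pr1, pr2, pr3.
by rewrite -(RiemannInt_P26 pr1 pr23) -(RiemannInt_P26 pr2 pr3) Rplus_assoc.
Qed.

Lemma RiemannInt_window_le (f : R -> R) a b c d lo hi (pr : Riemann_integrable f a d) :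
  a <= b -> b <= c -> c <= d ->
  (forall t, a <= t <= d -> lo <= f t) -> (forall t, b <= t <= c -> hi <= f t) ->
  hi * (c - b) + lo * ((b - a) + (d - c)) <= RiemannInt pr.
Proof.
move=> Hab Hbc Hcd Hlo Hhi.
have [pr1 [pr2 [pr3 ->]]] := RiemannInt_split3 pr Hab Hbc Hcd.
have := RiemannInt_const_le pr1 Hab (fun t Ht => Hlo t ltac:(lra)).
have := RiemannInt_const_le pr2 Hbc Hhi.
have := RiemannInt_const_le pr3 Hcd (fun t Ht => Hlo t ltac:(lra)).
lra.
Qed.

Lemma Rabs_increment_le_RiemannInt (g g' h : R -> R) a b c d (pr : Riemann_integrable h a d) :
  a <= b -> b <= c -> c <= d ->
  (forall t, derivable_pt_lim g t (g' t)) -> (forall t, continuity_pt g' t) ->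
  (forall t, a <= t <= d -> Rabs (g' t) <= h t) -> Rabs (g c - g b) <= RiemannInt pr.
Proof.
move=> Hab Hbc Hcd Hd Hc Hh.
have [pr1 [pr2 [pr3 ->]]] := RiemannInt_split3 pr Hab Hbc Hcd.
have prg : Riemann_integrable g' b c by apply: continuity_implies_RiemannInt.
rewrite -(RiemannInt_FTC prg Hd Hc Hbc).
have Hh0 t : a <= t <= d -> 0 <= h t by move=> Ht; apply: Rle_trans (Rabs_pos _) (Hh t Ht).
have := RiemannInt_const_le pr1 Hab (fun t Ht => Hh0 t ltac:(lra)).
have := RiemannInt_const_le pr3 Hcd (fun t Ht => Hh0 t ltac:(lra)).
have := RiemannInt_P17 prg (RiemannInt_P16 prg) Hbc.
have : RiemannInt (RiemannInt_P16 prg) <= RiemannInt pr2.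
  by apply: RiemannInt_P19 => // t Ht; apply: Hh; lra.
lra.
Qed.

Lemma MVT_lower (r r' : R -> R) a b kap : a <= b ->
  (forall s, a <= s <= b -> derivable_pt_lim r s (r' s)) ->
  (forall s, a <= s <= b -> kap <= r' s) -> kap * (b - a) <= r b - r a.
Proof.
move=> Hab Hd Hk; case: (Rle_lt_or_eq_dec _ _ Hab) => [Hlt|<-]; last lra.
have [s [-> Hs]] := MVT_cor2 r r' a b Hlt Hd.
by apply: Rmult_le_compat_r; [lra | apply: Hk; lra].
Qed.

(* If [r] increases at rate [kap] on an interval of length [4q], then [|r| >= kap q] on
   the first or the last quarter, depending on the sign of [r] at the midpoint. *)
Lemma Rabs_ge_window (r r' : R -> R) a q kap : 0 < q -> 0 <= kap ->
  (forall s, a <= s <= a + 4 * q -> derivable_pt_lim r s (r' s)) ->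
  (forall s, a <= s <= a + 4 * q -> kap <= r' s) ->
  exists a', a <= a' /\ a' + q <= a + 4 * q /\
    forall s, a' <= s <= a' + q -> kap * q <= Rabs (r s).
Proof.
move=> q0 k0 Hd Hk.
have Hmvt b c : a <= b -> b <= c -> c <= a + 4 * q -> kap * (c - b) <= r c - r b.
  by move=> *; apply: MVT_lower => [|s Hs|s Hs]; [lra | apply: Hd | apply: Hk]; lra.
case: (Rle_dec 0 (r (a + 2 * q))) => Hmid.
- exists (a + 3 * q); split; [lra | split; [lra|]].
  move=> s Hs; have := Hmvt (a + 2 * q) s ltac:(lra) ltac:(lra) ltac:(lra).
  have := Rle_abs (r s); nra.
- exists a; split; [lra | split; [lra|]].
  move=> s Hs; have := Hmvt s (a + 2 * q) ltac:(lra) ltac:(lra) ltac:(lra).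
  have := Rle_abs (- r s); rewrite Rabs_Ropp; nra.
Qed.

Lemma quad_ge_of_pairing n (D : Mat n) al (d w : Rn n) M kap :
  (forall v, al * dot v v <= dot v (mulv D v)) -> 0 <= al -> 0 < M -> 0 < kap ->
  (forall i, Rabs (d i) <= M) -> kap <= Rabs (dot d (mulv D w)) ->
  al * (kap / (M * (mat_abs_sum D + 1)) * (kap / (M * (mat_abs_sum D + 1))))
    <= dot w (mulv D w).
Proof.
move=> Hal al0 M0 kap0 Hd Hkap.
have HK := mat_abs_sum_ge0 D.
set t := kap / (M * (mat_abs_sum D + 1)).
have t0 : 0 < t by apply: Rdiv_lt_0_compat; nra.
have [j Hj] : exists j, t < Rabs (w j).
  apply: NNPP => Hno.
  have Hw j : Rabs (w j) <= t by apply: Rnot_lt_le => Hj; apply: Hno; exists j.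
  have := Rabs_dot_mulv_le D (Rlt_le _ _ M0) (Rlt_le _ _ t0) Hd Hw.
  have -> : mat_abs_sum D * (M * t) = kap * (mat_abs_sum D / (mat_abs_sum D + 1)).
    by rewrite /t; field; split; apply: Rgt_not_eq; lra.
  have : mat_abs_sum D / (mat_abs_sum D + 1) < 1.
    by apply: (Rmult_lt_reg_r (mat_abs_sum D + 1)); [lra | field_simplify; lra].
  nra.
have Htt : t * t <= dot w w by have := Rabs_coord_sqr_le_dot w j; nra.
by apply: Rle_trans (Hal w); apply: Rmult_le_compat_l.
Qed.

(* The lower bounds on |u'|_D^2 obtained on a subwindow when u stays near an escape point:
   V large nearby, d . grad V large nearby for a fixed d, or |u| large; [K] stands for
   [mat_abs_sum D + 1]. *)
Definition kinetic_floor (al K rho c : R) : R :=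
  Rmin rho (Rmin (al * (rho / (8 * K) * (rho / (8 * K))))
                 (al * (c / (32 * K) * (c / (32 * K))))).

Lemma kinetic_floor_le al K rho c :
  kinetic_floor al K rho c <= rho /\
  kinetic_floor al K rho c <= al * (rho / (8 * K) * (rho / (8 * K))) /\
  kinetic_floor al K rho c <= al * (c / (32 * K) * (c / (32 * K))).
Proof.
rewrite /kinetic_floor; split; first exact: Rmin_l.
by split; apply: Rle_trans (Rmin_r _ _) _; [apply: Rmin_l | apply: Rmin_r].
Qed.

Definition lagrangian_floor (al K rho c : R) : R :=
  Rmin (kinetic_floor al K rho c / 16) (rho * rho * al / 2).

Lemma lagrangian_floor_le al K rho c :
  lagrangian_floor al K rho c <= kinetic_floor al K rho c / 16 /\
  lagrangian_floor al K rho c <= rho * rho * al / 2.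
Proof. by split; [apply: Rmin_l | apply: Rmin_r]. Qed.

Lemma lagrangian_floor_gt0 al K rho c : 0 < al -> 0 < K -> 0 < rho -> 0 < c ->
  0 < lagrangian_floor al K rho c.
Proof.
move=> al0 K0 rho0 c0.
apply: Rmin_pos; last by have := Rmult_lt_0_compat _ _ rho0 rho0; nra.
apply: Rdiv_lt_0_compat; last lra.
apply: Rmin_pos => //; apply: Rmin_pos; apply: Rmult_lt_0_compat => //;
  apply: Rmult_lt_0_compat; apply: Rdiv_lt_0_compat; lra.
Qed.

Section Trajectory.
Variables (n : nat) (D : Mat n) (V : Rn n -> R) (gradV : Rn n -> Rn n).
Variables (u u1 u2 : R -> Rn n) (al dH : R).
Hypotheses (HD : mat_posdef D) (al0 : 0 < al) (Hal : forall v, al * dot v v <= dot v (mulv D v)).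
Hypothesis Hs : is_solution D gradV u u1 u2.
Hypothesis HH : forall x, - dH <= / 2 * normD D (u1 x) ^ 2 - V (u x) <= dH.

Let kin t := dot (u1 t) (mulv D (u1 t)).

Lemma kin_ge0 t : 0 <= kin t.
Proof. exact: quad_ge0. Qed.

Lemma hamiltonian_kin t : - dH <= / 2 * kin t - V (u t) <= dH.
Proof. by rewrite /kin -normD_sqr. Qed.

Variables (x0 : R)
  (pr : Riemann_integrable (fun x => / 2 * normD D (u1 x) ^ 2 + V (u x)) x0 (x0 + 1)).

Lemma lagrangian_int_ge_of_window sig a : x0 <= a -> a + 1/8 <= x0 + 1 ->
  (forall t, a <= t <= a + 1/8 -> sig <= kin t) -> sig / 8 - dH <= RiemannInt pr.
Proof.
move=> Ha0 Ha1 Hkin.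
have HL t : / 2 * normD D (u1 t) ^ 2 + V (u t) = kin t - (/ 2 * kin t - V (u t)).
  by rewrite normD_sqr // /kin; lra.
have Hlo t : x0 <= t <= x0 + 1 -> - dH <= / 2 * normD D (u1 t) ^ 2 + V (u t).
  by rewrite HL; have := hamiltonian_kin t; have := kin_ge0 t; lra.
have Hhi t : a <= t <= a + 1/8 -> sig - dH <= / 2 * normD D (u1 t) ^ 2 + V (u t).
  by move=> Ht; rewrite HL; have := hamiltonian_kin t; have := Hkin t Ht; lra.
have := RiemannInt_window_le pr Ha0 (ltac:(lra) : a <= a + 1/8) Ha1 Hlo Hhi; lra.
Qed.

Lemma lagrangian_int_ge_of_exit rho x y i : 0 < rho ->
  x0 <= x <= x0 + 1 -> x0 <= y <= x0 + 1 -> rho < Rabs (u y i - u x i) ->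
  rho * rho * al - dH < RiemannInt pr.
Proof.
move=> rho0 Hx Hy Hxy.
set Z := 2 * rho * al; have Z0 : 0 < Z by rewrite /Z; nra.
have prh := RiemannInt_P10 (/ Z) (RiemannInt_P14 x0 (x0 + 1) (rho / 2 + dH / Z)) pr.
have Hint : RiemannInt prh = rho / 2 + (dH + RiemannInt pr) / Z.
  rewrite (RiemannInt_P13 (RiemannInt_P14 x0 (x0 + 1) _) pr prh) RiemannInt_P15.
  by field; lra.
(* pointwise [|u1 i| <= rho / 2 + (dH + L) / Z], by AM-GM and [al |u1 i|^2 <= kin <= L + dH] *)
have Hu1 t : x0 <= t <= x0 + 1 -> Rabs (u1 t i) <=
    fct_cte (rho / 2 + dH / Z) t + / Z * (/ 2 * normD D (u1 t) ^ 2 + V (u t)).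
  move=> _; rewrite /fct_cte normD_sqr //.
  have := hamiltonian_kin t; have := Hal (u1 t); have := Rabs_coord_sqr_le_dot (u1 t) i.
  rewrite /kin; set k := dot (u1 t) (mulv D (u1 t)).
  have := Rabs_pos (u1 t i); set z := Rabs (u1 t i) => z0 Hz Hal1 HHt.
  have Hamgm : Z * z <= rho * rho * al + al * (z * z).
    by have := Rmult_le_pos _ _ (Rlt_le _ _ al0) (Rle_0_sqr (z - rho)); rewrite /Z /Rsqr; nra.
  apply: (Rmult_le_reg_l Z) => //.
  have -> : Z * (rho / 2 + dH / Z + / Z * (/ 2 * k + V (u t)))
          = rho * rho * al + dH + (/ 2 * k + V (u t)) by rewrite /Z; field; lra.
  nra.
have Hder t := proj1 Hs t i.
have Hcont := solution_u1_cont Hs i.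
have Hbound : rho < RiemannInt prh.
  case: (Rle_dec x y) => Hle.
  - by have := Rabs_increment_le_RiemannInt prh (proj1 Hx) Hle (proj2 Hy) Hder Hcont Hu1; lra.
  - have := Rabs_increment_le_RiemannInt prh (proj1 Hy) (ltac:(lra) : y <= x) (proj2 Hx) Hder Hcont Hu1.
    by rewrite Rabs_minus_sym; lra.
rewrite Hint in Hbound.
have : rho / 2 * Z < dH + RiemannInt pr.
  by apply: (Rmult_lt_reg_r (/ Z)); [apply: Rinv_0_lt_compat | rewrite Rmult_assoc Rinv_r; lra].
rewrite /Z; lra.
Qed.

Lemma fast_window_of_pairing (w w' : R -> Rn n) a M kap : 0 < M -> 0 < kap ->
  (forall s, a <= s <= a + 1/2 -> (forall i, Rabs (w s i) <= M) /\
     (forall i, derivable_pt_lim (fun t => w t i) s (w' s i)) /\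
     kap <= dot (w' s) (mulv D (u1 s)) + dot (w s) (gradV (u s))) ->
  exists a', a <= a' /\ a' + 1/8 <= a + 1/2 /\ forall s, a' <= s <= a' + 1/8 ->
    al * (kap / 8 / (M * (mat_abs_sum D + 1)) * (kap / 8 / (M * (mat_abs_sum D + 1)))) <= kin s.
Proof.
move=> M0 kap0 Hw.
have [a' [Ha1 [Ha2 Hr]]] := Rabs_ge_window (r := fun s => dot (w s) (mulv D (u1 s)))
  (r' := fun s => dot (w' s) (mulv D (u1 s)) + dot (w s) (gradV (u s))) (a := a) (q := 1/8)
  (ltac:(lra) : 0 < 1/8) (Rlt_le _ _ kap0)
  (fun s Hs' => derivable_pt_lim_dot_mulv_u1 Hs (proj1 (proj2 (Hw s ltac:(lra)))))
  (fun s Hs' => proj2 (proj2 (Hw s ltac:(lra)))).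
exists a'; split => //; split; first lra.
move=> s Hs'; have Hrs := Hr s Hs'.
apply: (quad_ge_of_pairing Hal (Rlt_le _ _ al0) M0 (ltac:(lra) : 0 < kap / 8)
  (proj1 (Hw s ltac:(lra)))); lra.
Qed.

Lemma fast_window_of_direction (d : Rn n) a rho : 0 < rho -> (forall i, Rabs (d i) <= 1) ->
  (forall s, a <= s <= a + 1/2 -> rho <= dot d (gradV (u s))) ->
  exists a', a <= a' /\ a' + 1/8 <= a + 1/2 /\ forall s, a' <= s <= a' + 1/8 ->
    al * (rho / (8 * (mat_abs_sum D + 1)) * (rho / (8 * (mat_abs_sum D + 1)))) <= kin s.
Proof.
move=> rho0 Hd Hdg.
have Hw s : a <= s <= a + 1/2 -> (forall i, Rabs (d i) <= 1) /\
    (forall i, derivable_pt_lim (fun _ => d i) s 0) /\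
    rho <= dot vzero (mulv D (u1 s)) + dot d (gradV (u s)).
  move=> Hs'; split => //; split => [i|]; first exact: derivable_pt_lim_const.
  by rewrite dot0l // Rplus_0_l; apply: Hdg.
have [a' [Ha1 [Ha2 Hkin]]] :=
  fast_window_of_pairing (w := fun _ => d) (w' := fun _ => vzero) Rlt_0_1 rho0 Hw.
exists a'; split => //; split => // s Hs'; apply: Rle_trans (Hkin s Hs'); apply: Req_le.
by have HK := mat_abs_sum_ge0 D; field; lra.
Qed.

Lemma fast_window_of_coercive c R0 a x rho : 0 < c -> 0 < rho <= 1 ->
  (forall w, R0 <= vnorm w -> c <= dot w (gradV w) / (vnorm w ^ 2)) ->
  (exists i, 2 * Rabs R0 + 2 < Rabs (u x i)) ->
  (forall s, a <= s <= a + 1/2 -> sup_ball (u x) rho (u s)) ->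
  exists a', a <= a' /\ a' + 1/8 <= a + 1/2 /\ forall s, a' <= s <= a' + 1/8 ->
    al * (c / (32 * (mat_abs_sum D + 1)) * (c / (32 * (mat_abs_sum D + 1)))) <= kin s.
Proof.
move=> c0 [rho0 rho1] Hc [i1 Hi1] Hstay.
have [i0 Hi0] := ord_argmax (fun i => Rabs (u x i)) i1.
set P := Rabs (u x i0) in Hi0.
have HP : 2 * Rabs R0 + 2 < P by have := Hi0 i1; lra.
have HR0 := Rabs_pos R0.
have Hnear s i : a <= s <= a + 1/2 ->
    Rabs (u s i) <= Rabs (u x i) + rho /\ Rabs (u x i) <= Rabs (u s i) + rho.
  move=> Hs'; have := Hstay s Hs' i; have := Rabs_triang_inv (u s i) (u x i).
  by have := Rabs_triang_inv (u x i) (u s i); rewrite (Rabs_minus_sym (u x i)); lra.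
have Hw s : a <= s <= a + 1/2 -> (forall i, Rabs (u s i) <= 2 * P) /\
    (forall i, derivable_pt_lim (fun t => u t i) s (u1 s i)) /\
    c * (P * P / 4) <= dot (u1 s) (mulv D (u1 s)) + dot (u s) (gradV (u s)).
  move=> Hs'; split; first by move=> i; have := Hi0 i; have := Hnear s i Hs'; lra.
  split; first by move=> i; exact: (proj1 Hs s i).
  have Hus : P / 2 <= Rabs (u s i0) by have := Hnear s i0 Hs'; rewrite -/P; lra.
  have Hc' := coerc_dot_ge Hc (ltac:(lra) : Rabs R0 <= Rabs (u s i0)) (ltac:(lra) : 0 < Rabs (u s i0)).
  have Hsq : P / 2 * (P / 2) <= dot (u s) (u s).
    by apply: Rle_trans (Rabs_coord_sqr_le_dot (u s) i0); apply: Rmult_le_compat; lra.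
  have : c * (P * P / 4) <= c * dot (u s) (u s) by apply: Rmult_le_compat_l; lra.
  by have := kin_ge0 s; rewrite /kin; lra.
have [a' [Ha1 [Ha2 Hkin]]] := fast_window_of_pairing (ltac:(lra) : 0 < 2 * P)
  (ltac:(have := Rmult_lt_0_compat P P; nra) : 0 < c * (P * P / 4)) Hw.
exists a'; split => //; split => // s Hs'; apply: Rle_trans (Hkin s Hs').
have HK := mat_abs_sum_ge0 D.
have -> : c * (P * P / 4) / 8 / (2 * P * (mat_abs_sum D + 1))
        = c / (32 * (mat_abs_sum D + 1)) * (P / 2) by field; lra.
have : 0 <= c / (32 * (mat_abs_sum D + 1)) by apply: Rlt_le; apply: Rdiv_lt_0_compat; lra.
move: (c / _) => t Ht; apply: Rmult_le_compat_l; first lra.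
have Htp : t <= t * (P / 2) by rewrite -{1}[t]Rmult_1_r; apply: Rmult_le_compat_l; lra.
by apply: Rmult_le_compat.
Qed.

Lemma fast_window_of_stay rho c R0 a x : 0 < rho <= 1 -> 0 < c ->
  (forall w, R0 <= vnorm w -> c <= dot w (gradV w) / (vnorm w ^ 2)) ->
  ((forall i, Rabs (u x i) <= 2 * Rabs R0 + 2) ->
     (forall y, sup_ball (u x) rho y -> - rho <= V y -> rho <= V y) \/
     (exists d, (forall i, Rabs (d i) <= 1) /\
        forall y, sup_ball (u x) rho y -> rho <= dot d (gradV y))) ->
  dH <= rho / 2 ->
  (forall s, a <= s <= a + 1/2 -> sup_ball (u x) rho (u s)) ->
  exists a', a <= a' /\ a' + 1/8 <= a + 1/2 /\ forall s, a' <= s <= a' + 1/8 ->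
    kinetic_floor al (mat_abs_sum D + 1) rho c <= kin s.
Proof.
move=> [rho0 rho1] c0 Hc HK HdH Hstay.
have [Hsig1 [Hsig2 Hsig3]] := kinetic_floor_le al (mat_abs_sum D + 1) rho c.
case: (classic (forall i, Rabs (u x i) <= 2 * Rabs R0 + 2)) => [/HK [HV|[d [Hd Hdg]]]|Hbd].
- exists a; split; [lra | split; [lra|]] => s Hs'.
  have := hamiltonian_kin s; have := kin_ge0 s.
  have := HV (u s) (Hstay s ltac:(lra)); rewrite /kin; lra.
- have [a' [Ha'0 [Ha'1 Hkin]]] := fast_window_of_direction rho0 Hd (fun s Hs' => Hdg _ (Hstay s Hs')).
  by exists a'; split => //; split => // s Hs'; have := Hkin s Hs'; lra.
- have Hbig : exists i, 2 * Rabs R0 + 2 < Rabs (u x i).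
    by apply: NNPP => Hno; apply: Hbd => i; apply: Rnot_lt_le => Hi; apply: Hno; exists i.
  have [a' [Ha'0 [Ha'1 Hkin]]] := fast_window_of_coercive c0 (conj rho0 rho1) Hc Hbig Hstay.
  by exists a'; split => //; split => // s Hs'; have := Hkin s Hs'; lra.
Qed.

Lemma lagrangian_int_ge_floor rho c R0 x : 0 < rho <= 1 -> 0 < c ->
  (forall w, R0 <= vnorm w -> c <= dot w (gradV w) / (vnorm w ^ 2)) ->
  ((forall i, Rabs (u x i) <= 2 * Rabs R0 + 2) ->
     (forall y, sup_ball (u x) rho y -> - rho <= V y -> rho <= V y) \/
     (exists d, (forall i, Rabs (d i) <= 1) /\
        forall y, sup_ball (u x) rho y -> rho <= dot d (gradV y))) ->
  x0 <= x <= x0 + 1 -> dH <= lagrangian_floor al (mat_abs_sum D + 1) rho c ->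
  lagrangian_floor al (mat_abs_sum D + 1) rho c <= RiemannInt pr.
Proof.
move=> Hrho c0 Hc HK Hx HdH.
have [Hsig _] := kinetic_floor_le al (mat_abs_sum D + 1) rho c.
have [Hfl1 Hfl2] := lagrangian_floor_le al (mat_abs_sum D + 1) rho c.
have [a [Ha0 [Ha1 Hxa]]] : exists a, x0 <= a /\ a + 1/2 <= x0 + 1 /\ a <= x <= a + 1/2.
  by case: (Rle_dec x (x0 + 1/2)) => Hx2; [exists x | exists (x - 1/2)]; lra.
case: (classic (forall s, a <= s <= a + 1/2 -> sup_ball (u x) rho (u s))) => Hstay.
- have [a' [Ha'0 [Ha'1 Hkin]]] := fast_window_of_stay Hrho c0 Hc HK ltac:(lra) Hstay.
  by have := lagrangian_int_ge_of_window (ltac:(lra) : x0 <= a') (ltac:(lra)) Hkin; lra.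
- have [s [Hs' [i Hi]]] : exists s, a <= s <= a + 1/2 /\ exists i, rho < Rabs (u s i - u x i).
    apply: NNPP => Hno; apply: Hstay => s Hs' i; apply: Rnot_lt_le => Hi.
    by apply: Hno; exists s; split => //; exists i.
  by have := lagrangian_int_ge_of_exit (proj1 Hrho) Hx (ltac:(lra) : x0 <= s <= x0 + 1) Hi; lra.
Qed.

End Trajectory.

Theorem mainTheorem14
  (n : nat) (Hn : (1 <= n)%nat)
  (D : Mat n) (HDsym : mat_symmetric D) (HDpos : mat_posdef D)
  (k : nat) (Hk : (2 <= k)%nat)
  (V : Rn n -> R) (gradV : Rn n -> Rn n) (HessV : Rn n -> Mat n)
  (HVk : Ck n k V) (Hgrad : is_gradient V gradV) (Hhess : is_hessian gradV HessV)
  (Hcoerc : H_coerc gradV) (Hnorm : H_norm V gradV HessV)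
  (Honly : H_only_min V gradV HessV)
  (lam_min lam_max : R)
  (Hlmin_attained : exists m, in_M0 V gradV m /\ eigenvalue (HessV m) lam_min)
  (Hlmin_min : forall m lam, in_M0 V gradV m -> eigenvalue (HessV m) lam -> lam_min <= lam)
  (Hlmax_attained : exists m, in_M0 V gradV m /\ eigenvalue (HessV m) lam_max)
  (Hlmax_max : forall m lam, in_M0 V gradV m -> eigenvalue (HessV m) lam -> lam <= lam_max)
  (dEsc : R) (HdEsc : 0 < dEsc)
  (HdEsc_small : forall m u, in_M0 V gradV m -> normD D (vsub u m) <= dEsc ->
      forall lam, eigenvalue (HessV u) lam -> lam_min / 2 <= lam <= 2 * lam_max) :
  exists deltaHam deltaLag : R, 0 < deltaHam /\ 0 < deltaLag /\
    forall u u1 u2 : R -> Rn n,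
      is_solution D gradV u u1 u2 ->
      (forall x, - deltaHam <= / 2 * (normD D (u1 x)) ^ 2 - V (u x) <= deltaHam) ->
      forall x0 : R,
        (exists x, x0 <= x <= x0 + 1 /\ in_Sigma_Esc D V gradV dEsc u x) ->
        forall pr : Riemann_integrable
                      (fun x => / 2 * (normD D (u1 x)) ^ 2 + V (u x)) x0 (x0 + 1),
          deltaLag <= RiemannInt pr.
Proof.
have [HVc Hgc] := Ck2_cont_grad Hk HVk Hgrad.
have [al [al0 Hal]] := posdef_coercive HDpos.
have [c [R0 [c0 Hc]]] := Hcoerc.
have [rho [rho0 [rho1 HK]]] := escape_alternative HVc Hgc (2 * Rabs R0 + 2) HDpos HdEsc.
have Hfloor : 0 < lagrangian_floor al (mat_abs_sum D + 1) rho c.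
  by apply: lagrangian_floor_gt0 => //; have := mat_abs_sum_ge0 D; lra.
exists (lagrangian_floor al (mat_abs_sum D + 1) rho c),
       (lagrangian_floor al (mat_abs_sum D + 1) rho c); do 2!split => //.
move=> u u1 u2 Hs HH x0 [x [Hx Hesc]] pr.
exact: (lagrangian_int_ge_floor HDpos al0 Hal Hs HH pr (conj rho0 rho1) c0 Hc
  (fun Hbd => HK (u x) Hbd Hesc) Hx (Rle_refl _)).
Qed.
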